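(* Let $X$ and $Y$ be Tychonoff spaces and let $f\colon X\to Y$ be a quotient map of $X$ onto $Y$. If $X$ is a weakly Grothendieck space, then $Y$ is a weakly Grothendieck space.
   Context: For a Tychonoff space $X$, $C_p(X)$ denotes the space of all continuous real-valued functions on $X$ with the topology of pointwise convergence. A subset $A$ of a space $Z$ is countably compact in $Z$ if every infinite subset of $A$ has an accumulation point in $Z$. A space $Z$ is a $g$-space if for every subset $A\subseteq Z$ that is countably compact in $Z$, the closure of $A$ in $Z$ is compact. A Tychonoff space $X$ is weakly Grothendieck if $C_p(X)$ is a $g$-space, and Grothendieck if every subspace of $C_p(X)$ is a $g$-space. *)

From mathcomp Require Import all_boot all_order all_algebra.
From mathcomp Require Import all_classical all_reals all_analysis.
Set Implicit Arguments. Unset Strict Implicit. Unset Printing Implicit Defensive.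
Import Order.TTheory GRing.Theory Num.Theory numFieldNormedType.Exports.
Local Open Scope classical_set_scope.
Local Open Scope ring_scope.

Definition tychonoff_space (R : realType) (T : topologicalType) : Prop :=
  accessible_space T /\
  forall (a : T) (B : set T), closed B -> ~ B a ->
    exists f : T -> R, [/\ continuous f, f a = 0 & forall b, B b -> f b = 1].

Definition quotient_map (X Y : topologicalType) (f : X -> Y) : Prop :=
  [/\ (forall y : Y, exists x : X, f x = y), continuous f &
      forall U : set Y, open (f @^-1` U) -> open U].

(* The underlying set of C_p(X) inside the space of all functions with the
   topology of pointwise convergence; C_p(X) carries the subspace topology. *)
Definition Cp (R : realType) (X : topologicalType) : set {ptws X -> R} :=
  [set f | continuous (f : X -> R)].

(* For a subspace S of a space Z (S viewed with the subspace topology):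
   A is countably compact in S iff every infinite subset of A has an
   accumulation point in S.  (Accumulation points in S of subsets of S are
   exactly the points of S that are accumulation points in Z.) *)
Definition countably_compact_in (Z : topologicalType) (S A : set Z) : Prop :=
  forall B : set Z, B `<=` A -> infinite_set B ->
    exists z, S z /\ limit_point B z.

(* The subspace S of Z is a g-space: for every A contained in S which is
   countably compact in S, the closure of A in S (= closure A `&` S) is
   compact. *)
Definition g_space (Z : topologicalType) (S : set Z) : Prop :=
  forall A : set Z, A `<=` S -> countably_compact_in S A ->
    compact (closure A `&` S).

Definition weakly_Grothendieck (R : realType) (X : topologicalType) : Prop :=
  g_space (@Cp R X).
Arguments tychonoff_space : clear implicits.
Arguments weakly_Grothendieck : clear implicits.
Arguments Cp : clear implicits.

From mathcomp Require Import all_boot all_order all_algebra.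
From mathcomp Require Import all_classical all_reals all_analysis.
Import Order.TTheory GRing.Theory Num.Theory numFieldNormedType.Exports.
Local Open Scope classical_set_scope.
Local Open Scope ring_scope.

(* Fix a section s of the quotient map f.  Precomposition with f,
   phi g := g \o f, maps C_p(Y) continuously and injectively into C_p(X), with
   continuous left inverse psi h := h \o s.  The image under phi of a set A
   countably compact in C_p(Y) is countably compact in C_p(X), so the trace of
   its closure on C_p(X) is compact.  Every function in that closure is
   constant on the fibres of f, hence of the form phi (psi h), and psi h is
   continuous because f is a quotient map.  Therefore the trace on C_p(Y) of
   the closure of A is the continuous image under psi of a compact set. *)

Lemma ptws_continuous (Z X : topologicalType) (T : uniformType)
    (h : Z -> {ptws X -> T}) :
  (forall x, continuous (fun z => h z x)) -> continuous h.
Proof. by move=> hc z; apply/pointwise_cvgP => x; exact: hc. Qed.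

Lemma ptws_eval_continuous {X : topologicalType} {T : uniformType} (x : X) :
  continuous (fun g : {ptws X -> T} => g x).
Proof. exact: (@proj_continuous X (fun _ => T) x). Qed.

Lemma precomp_ptws_continuous {X Y : topologicalType} {T : uniformType}
    (f : X -> Y) :
  continuous (fun g : {ptws Y -> T} => (g \o f : {ptws X -> T})).
Proof. by apply: ptws_continuous => x; exact: ptws_eval_continuous. Qed.

Lemma closed_ptws_eq (R : realType) (X : topologicalType) (x1 x2 : X) :
  closed [set k : {ptws X -> R} | k x1 = k x2].
Proof.
have -> : [set k : {ptws X -> R} | k x1 = k x2] =
          (fun k : {ptws X -> R} => k x1 - k x2) @^-1` [set 0].
  by apply/seteqP; split => k /=; [move->; rewrite subrr | move/subr0_eq].
have dc : continuous (fun k : {ptws X -> R} => k x1 - k x2).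
  move=> k; exact: (cvgB (ptws_eval_continuous x1 k) (ptws_eval_continuous x2 k)).
by apply: preimage_closed; [move=> k _; exact: dc | exact: closed_eq].
Qed.

Lemma image_closure_subset (Z W : topologicalType) (phi : Z -> W) (A : set Z) :
  continuous phi -> phi @` closure A `<=` closure (phi @` A).
Proof.
move=> phic _ [z clz <-] U /phic /clz [a [Aa Ua]].
by exists (phi a); split => //; exists a.
Qed.

Lemma countably_compact_in_image (Z W : topologicalType) (phi : Z -> W)
    (S A : set Z) (S' : set W) :
  continuous phi -> injective phi -> phi @` S `<=` S' ->
  countably_compact_in S A -> countably_compact_in S' (phi @` A).
Proof.
move=> phic phiinj phiS ccA B BA Binf.
have B0inf : infinite_set (A `&` phi @^-1` B).
  move=> /(finite_image phi) fin; apply: Binf; apply: sub_finite_set fin.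
  move=> b Bb; have [a Aa ab] := BA b Bb; exists a => //.
  by split => //; rewrite /= ab.
have [z [Sz limz]] := ccA _ (@subIsetl _ _ _) B0inf.
exists (phi z); split; first exact: phiS.
move=> U /phic /limz [y [yz [_ By] Uy]].
by exists (phi y); split => //; apply: contra yz => /eqP /phiinj ->.
Qed.

Lemma quotient_map_continuous {X Y Z : topologicalType} {f : X -> Y}
    {h : Y -> Z} :
  quotient_map f -> continuous (h \o f) -> continuous h.
Proof.
case=> _ _ fquot /continuousP hfc; apply/continuousP => U oU.
by apply: fquot; exact: hfc.
Qed.

Lemma closure_precomp_fibrewise {R : realType} {X Y : topologicalType}
    {f : X -> Y} {A : set {ptws Y -> R}} {x1 x2 : X} :
  f x1 = f x2 ->
  closure ((fun g : {ptws Y -> R} => (g \o f : {ptws X -> R})) @` A)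
    `<=` [set h : {ptws X -> R} | h x1 = h x2].
Proof.
move=> e; move/closure_id: (closed_ptws_eq R X x1 x2) => ->.
by apply: closureS => _ [g _ <-]; rewrite /= e.
Qed.

Theorem lemma2 (R : realType) (X Y : topologicalType) (f : X -> Y) :
  tychonoff_space R X -> tychonoff_space R Y -> quotient_map f ->
  weakly_Grothendieck R X -> weakly_Grothendieck R Y.
Proof.
move=> _ _ fq WG A ACp Acc; have [fsurj fcont _] := fq.
pose s y := projT1 (cid (fsurj y)).
have fsK : cancel s f by move=> y; rewrite /s; case: cid.
pose phi (g : {ptws Y -> R}) : {ptws X -> R} := g \o f.
pose psi (h : {ptws X -> R}) : {ptws Y -> R} := h \o s.
have psiphi : cancel phi psi by move=> g; apply/funext => y; rewrite /psi /phi /= fsK.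
have phiCp : phi @` Cp R Y `<=` Cp R X.
  by move=> _ [g Cg <-] x; apply: continuous_comp; [exact: fcont | exact: Cg].
have phic : continuous phi := precomp_ptws_continuous f.
have psic : continuous psi := precomp_ptws_continuous s.
have K : compact (closure (phi @` A) `&` Cp R X).
  apply: WG; first by move=> _ [g Ag <-]; apply: phiCp; exists g => //; exact: ACp.
  exact: countably_compact_in_image (can_inj psiphi) phiCp Acc.
suff -> : closure A `&` Cp R Y = psi @` (closure (phi @` A) `&` Cp R X).
  by apply: continuous_compact K; apply: continuous_subspaceT.
apply/seteqP; split => [g [clg Cg] | _ [h [clh Ch] <-]].
- exists (phi g); last exact: psiphi.
  by split; [exact: image_closure_subset | apply: phiCp; exists g].
- have hE : h = phi (psi h).
    apply/funext => x; rewrite /phi /psi /=.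
    by have /= -> := closure_precomp_fibrewise (fsK (f x)) _ clh.
  split.
    by rewrite -[A]image_id -(eq_imagel (fun g _ => psiphi g)) -image_comp;
      apply: image_closure_subset => //; exists h.
  by move: Ch; rewrite {1}hE; exact: (quotient_map_continuous fq).
Qed.
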